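(* Let $\mu$ be a partition and write $\mathrm{Res}_\mu(t)=\sum_{j\in\mathbb{Z}}b_jt^j$. Let $k\in\mathbb{Z}$. (a) There is a removable cell of content $k$ if and only if: $b_{k-1}=b_k$ and $b_{k+1}=b_k-1$ (when $k>0$); or $b_{k+1}=b_k$ and $b_{k-1}=b_k-1$ (when $k<0$); or $b_{-1}=b_1$ and $b_0=b_1+1$ (when $k=0$). (b) There is an addable cell of content $k$ if and only if: $b_{k+1}=b_k$ and $b_{k-1}=b_k+1$ (when $k>0$); or $b_{k-1}=b_k$ and $b_{k+1}=b_k+1$ (when $k<0$); or $b_{-1}=b_0=b_1$ (when $k=0$). (c) No cell of content $k$ is addable or removable if and only if: $b_{k+1}=b_k=b_{k-1}$ or $b_{k+1}=b_k-1=b_{k-1}-2$ (when $k>0$); or $b_{k+1}=b_k=b_{k-1}$ or $b_{k+1}=b_k+1=b_{k-1}+2$ (when $k<0$); or $b_{-1}=b_0=b_1+1$ or $b_1=b_0=b_{-1}+1$ (when $k=0$).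
   Context: $\mathrm{Res}_\mu(t)=\sum_{\square\in\mu}t^{c(\square)}$, where $c(i,j)=j-i$ is the content of a cell $(i,j)$ of the Young diagram $\{(i,j):1\le j\le\mu_i\}$. A cell of $\mu$ is removable if deleting it leaves a Young diagram. A cell not in $\mu$ is addable if adding it gives a Young diagram. *)

From mathcomp Require Import all_boot all_order all_algebra.
Set Implicit Arguments. Unset Strict Implicit. Unset Printing Implicit Defensive.
Import GRing.Theory Num.Theory.

Definition is_partition (mu : seq nat) : bool :=
  sorted geq mu && all (fun m => 0 < m) mu.

Definition cells (mu : seq nat) : seq (nat * nat) :=
  [seq (i.+1, j.+1) | i <- iota 0 (size mu), j <- iota 0 (nth 0 mu i)].

Definition content (c : nat * nat) : int := (c.2%:Z - c.1%:Z)%R.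

Definition is_young (D : seq (nat * nat)) : Prop :=
  exists la, is_partition la /\ cells la =i D.

Definition removable (mu : seq nat) (c : nat * nat) : Prop :=
  c \in cells mu /\ is_young [seq x <- cells mu | x != c].

Definition addable (mu : seq nat) (c : nat * nat) : Prop :=
  c \notin cells mu /\ is_young (c :: cells mu).

(* Coefficient b_j of t^j in Res_mu(t) = sum over cells of t^{content}. *)
Definition res_coef (mu : seq nat) (j : int) : int :=
  (count (fun c => content c == j) (cells mu))%:Z.

From mathcomp Require Import all_boot all_order all_algebra zify boolp.
Import GRing.Theory Num.Theory.

(* Index the rows from 0 and put beta_r = mu_r - r, the content of the first
   cell to the right of row r. Since mu is nonincreasing, beta is strictly
   decreasing; call its image M (the Maya diagram of mu). The cell ending row r
   is removable iff the row below is shorter, i.e. iff beta_r - 1 is not in M,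
   so there is a removable cell of content k iff k + 1 is in M and k is not;
   dually there is an addable cell of content k iff k is in M and k + 1 is not.
   Row r contains a cell of content j iff -r <= j < beta_r, and counting rows
   gives b_(j-1) - b_j = [j in M] - [j <= 0]. The three equivalences then
   follow by inspecting b_(k-1), b_k, b_(k+1) in the four cases for
   ([k in M], [k + 1 in M]). *)

Set Implicit Arguments.
Unset Strict Implicit.
Unset Printing Implicit Defensive.

Lemma sorted_geq_nth (s : seq nat) i j :
  sorted geq s -> (i <= j)%N -> (nth 0 s j <= nth 0 s i)%N.
Proof.
move=> s_nonincr le_ij; have [lt_js|] := ltnP j (size s); last first.
  by move=> /(nth_default 0) ->.
have geq_trans : transitive geq by move=> m n p /= le_nm le_pn; exact: leq_trans le_pn le_nm.
apply: (sorted_leq_nth geq_trans leqnn 0 s_nonincr) => //.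
exact: leq_ltn_trans lt_js.
Qed.

Lemma mem_cells mu a b :
  ((a, b) \in cells mu) = [&& (0 < a)%N, (0 < b)%N & (b <= nth 0 mu a.-1)%N].
Proof.
apply/allpairsPdep/idP => [[i [j [_ + [-> ->]]]]|].
  by rewrite mem_iota.
case: a b => [|i] [|j] //= le_j; exists i, j; rewrite !mem_iota /=.
by split=> //; rewrite ltnNge; apply: contraTN le_j => /(nth_default 0) ->.
Qed.

Lemma partition_of_nonincr (f : nat -> nat) N :
  {homo f : i j /~ (i <= j)%N} -> (forall i, (N <= i)%N -> f i = 0%N) ->
  exists2 la, is_partition la & forall i, nth 0 la i = f i.
Proof.
elim: N f => [|N IH] f f_nonincr f_eq0.
  by exists [::] => // i; rewrite nth_nil f_eq0.
have [la la_part la_f] := IH (f \o succn) (fun i j => @f_nonincr i.+1 j.+1)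
  (fun i => @f_eq0 i.+1).
have [f0_eq0|f0_gt0] := posnP (f 0%N).
  by exists [::] => // i; rewrite nth_nil; apply/esym/eqP; rewrite -leqn0 -f0_eq0 f_nonincr.
exists (f 0%N :: la) => [|[]//]; move: la_part; rewrite /is_partition /= f0_gt0.
case: la la_f => //= x la la_f /andP[-> ->].
by have /= -> := la_f 0%N; rewrite andbT f_nonincr.
Qed.

Lemma young_of_nonincr (f : nat -> nat) N (D : seq (nat * nat)) :
  {homo f : i j /~ (i <= j)%N} -> (forall i, (N <= i)%N -> f i = 0%N) ->
  (forall a b, ((a, b) \in D) = [&& (0 < a)%N, (0 < b)%N & (b <= f a.-1)%N]) ->
  is_young D.
Proof.
move=> f_nonincr f_eq0 memD.
have [la la_part la_f] := partition_of_nonincr f_nonincr f_eq0.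
by exists la; split=> // -[a b]; rewrite mem_cells la_f memD.
Qed.

Lemma young_closed D a b a' b' : is_young D -> (a.+1, b.+1) \in D ->
  (a' <= a)%N -> (b' <= b)%N -> (a'.+1, b'.+1) \in D.
Proof.
case=> la [/andP[la_nonincr _] eqD]; rewrite -!eqD !mem_cells /= => le_b le_a' le_b'.
apply: leq_trans (sorted_geq_nth la_nonincr le_a').
exact: leq_ltn_trans le_b' le_b.
Qed.

Lemma count_iota_single (P : pred nat) r0 n :
  (forall r, P r -> r = r0) -> count P (iota 0 n) = ((r0 < n)%N && P r0 : nat).
Proof.
move=> P_eq; case: (boolP (P r0)) => [Pr0|nPr0]; rewrite ?andbT ?andbF.
  rewrite -[(r0 < n)%N]/(0 <= r0 < 0 + n)%N -mem_iota -count_uniq_mem ?iota_uniq //.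
  by apply: eq_count => r /=; apply/idP/eqP => [/P_eq|->].
apply/eqP; rewrite /= eqn0Ngt -has_count; apply/hasPn => r _.
by apply: contra nPr0 => /[dup] /P_eq ->.
Qed.

Lemma eq_count_subz T (P Q R S : pred T) s :
  (forall x, (P x)%:Z - (Q x)%:Z = (R x)%:Z - (S x)%:Z :> int)%R ->
  ((count P s)%:Z - (count Q s)%:Z = (count R s)%:Z - (count S s)%:Z :> int)%R.
Proof. by move=> eqPQRS; elim: s => //= x s; have := eqPQRS x; lia. Qed.

Section NonincreasingRows.

Variable mu : seq nat.
Hypothesis mu_nonincr : sorted geq mu.

Let row_nonincr : {homo nth 0 mu : i j /~ (i <= j)%N} :=
  fun i j => sorted_geq_nth mu_nonincr.

Lemma young_set_row r n (D : seq (nat * nat)) :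
  (nth 0 mu r.+1 <= n)%N -> (0 < r -> n <= nth 0 mu r.-1)%N ->
  (forall a b, ((a, b) \in D) =
     [&& (0 < a)%N, (0 < b)%N & (b <= if a == r.+1 then n else nth 0 mu a.-1)%N]) ->
  is_young D.
Proof.
move=> le_next le_prev memD.
pose f i := if i == r then n else nth 0 mu i.
apply: (@young_of_nonincr f (size mu + r.+1)) => [i j le_ji|i le_i|a b].
- rewrite /f; case: (eqVneq i r) => [eq_ir|ne_ir]; case: (eqVneq j r) => [eq_jr|ne_jr].
  + by [].
  + by apply: leq_trans (le_prev _) (row_nonincr _); lia.
  + by apply: leq_trans (row_nonincr _) le_next; lia.
  + exact: row_nonincr.
- by rewrite /f ifN_eqC ?nth_default //; lia.
- by rewrite memD /f; case: a => [|a] //=; rewrite eqSS.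
Qed.

Lemma removable_cellP c :
  removable mu c <-> exists2 r, c = (r.+1, nth 0 mu r) & (nth 0 mu r.+1 < nth 0 mu r)%N.
Proof.
split=> [[] | [r -> drop_r]].
  case: c => -[|r] [|s]; rewrite mem_cells //= => le_s.
  set D := filter _ _ => young_D.
  have memD p : (p \in D) = (p != (r.+1, s.+1)) && (p \in cells mu).
    by rewrite mem_filter.
  have c_notin : (r.+1, s.+1) \notin D by rewrite memD eqxx.
  have end_r : s.+1 = nth 0 mu r.
    apply/eqP; rewrite eqn_leq le_s /= leqNgt; apply: contra c_notin => lt_s.
    apply: (young_closed young_D _ (leqnn r) (leqnSn s)).
    by rewrite memD mem_cells /= lt_s xpair_eqE /=; lia.
  exists r; rewrite -?end_r // ltnNge; apply: contra c_notin => le_next.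
  apply: (young_closed young_D _ (leqnSn r) (leqnn s)).
  by rewrite memD mem_cells /= le_next xpair_eqE /=; lia.
have row_pos : (0 < nth 0 mu r)%N by exact: leq_ltn_trans _ drop_r.
split; first by rewrite mem_cells /= row_pos /=.
apply: (young_set_row (r := r) (n := (nth 0 mu r).-1)) => [|r_gt0|a b].
- lia.
- exact: leq_trans (leq_pred _) (row_nonincr (leq_pred _)).
- rewrite mem_filter mem_cells xpair_eqE; case: a => [|a] //=; rewrite eqSS.
  by case: eqVneq => [->|] /=; lia.
Qed.

Lemma addable_cellP c :
  addable mu c <->
  exists2 r, c = (r.+1, (nth 0 mu r).+1) & (r == 0)%N || (nth 0 mu r < nth 0 mu r.-1)%N.
Proof.
split=> [[] | [r -> corner_r]].
  case: c => a b c_notin young_D; have [la [_ eqD]] := young_D.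
  have := mem_head (a, b) (cells mu); rewrite -eqD mem_cells.
  case: a b c_notin young_D {eqD} => [|r] [|s] //= + young_D _.
  rewrite mem_cells /= -leqNgt => le_row.
  have end_r : s = nth 0 mu r.
    case: s le_row young_D => [|s] le_row young_D; first by lia.
    have := young_closed young_D (mem_head _ _) (leqnn r) (leqnSn s).
    by rewrite in_cons mem_cells xpair_eqE /=; lia.
  exists r; first by rewrite end_r.
  case: r young_D le_row end_r => [|r] //= young_D le_row end_r; rewrite ltnNge.
  apply/negP => le_prev.
  have := young_closed young_D (mem_head _ _) (leqnSn r) (leqnn s).
  by rewrite in_cons mem_cells xpair_eqE /=; lia.
split; first by rewrite mem_cells /= ltnn.
apply: (young_set_row (r := r) (n := (nth 0 mu r).+1)) => [|r_gt0|a b].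
- exact/leqW/row_nonincr.
- by move: corner_r; rewrite eqn0Ngt r_gt0.
- rewrite in_cons mem_cells xpair_eqE; case: a => [|a] //=; rewrite eqSS.
  by case: eqVneq => [->|] /=; lia.
Qed.

Local Open Scope ring_scope.

Definition beta (r : nat) : int := (nth 0%N mu r)%:Z - r%:Z.

Definition maya : pred int := fun j => `[< exists r, beta r = j >].

Lemma res_coef_rows (j : int) :
  res_coef mu j = (count (fun r => (0 <= r%:Z + j) && (j < beta r)) (iota 0 (size mu)))%:Z.
Proof.
rewrite /res_coef /cells count_flatten -map_comp -sumn_count; congr (Posz (sumn _)).
apply: eq_map => r /=; rewrite count_map (count_iota_single (r0 := `|(r%:Z + j)%R|%N)).
  by rewrite /content /beta /=; lia.
by move=> s; rewrite /content /=; lia.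
Qed.

Lemma beta_nonincr r r' : (r <= r')%N -> beta r' <= beta r.
Proof. by move=> /[dup] /row_nonincr; rewrite /beta; lia. Qed.

Lemma beta_inj : injective beta.
Proof.
move=> r r'; rewrite /beta.
by have := @row_nonincr r r'; have := @row_nonincr r' r; lia.
Qed.

Lemma maya_gap r (j : int) : beta r.+1 < j < beta r -> ~~ maya j.
Proof.
move=> /andP[lt_next lt_j]; apply/asboolP => -[r' beta_r'].
by case: (leqP r' r) => /[dup] /beta_nonincr; lia.
Qed.

Lemma res_coef_diff (j : int) :
  res_coef mu (j - 1) - res_coef mu j = (maya j)%:Z - (j <= 0)%R%:Z.
Proof.
(* Row r has a cell of content j - 1 but none of content j exactly at its end
   (beta r = j), and the converse exactly at its start (r + j = 0). *)
rewrite !res_coef_rows (eq_count_subz (R := fun r => (beta r == j) && (0 < r%:Z + j :> int))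
  (S := fun r => (r%:Z + j == 0 :> int) && (j < beta r))); last by move=> r; lia.
rewrite [X in _ - X%:Z](count_iota_single (r0 := `|j|%N)); last by move=> r /andP[/eqP + _]; lia.
have row_eq0 r : (size mu <= r)%N -> nth 0%N mu r = 0%N := @nth_default _ 0%N mu r.
have := row_eq0 `|j|%N; rewrite /maya; case: asboolP => [[r1 beta_r1]|not_maya].
  rewrite (count_iota_single (r0 := r1)); last first.
    by move=> r /andP[/eqP]; rewrite -beta_r1 => /beta_inj.
  have := row_eq0 r1; move: beta_r1; rewrite /beta.
  by have := @row_nonincr r1 `|j|%N; have := @row_nonincr `|j|%N r1; lia.
rewrite (count_iota_single (r0 := 0%N)); last first.
  by move=> r /andP[/eqP beta_r]; case: not_maya; exists r.
have : beta 0%N <> j by move=> beta_0; apply: not_maya; exists 0%N.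
have : beta `|j|%N <> j by move=> beta_j; apply: not_maya; exists `|j|%N.
by rewrite /beta; lia.
Qed.

Lemma removable_maya (k : int) :
  (exists c, content c = k /\ removable mu c) <-> maya (k + 1) && ~~ maya k.
Proof.
split=> [[_ [<- /removable_cellP [r -> drop_r]]] | ].
  have -> : content (r.+1, nth 0%N mu r) = beta r - 1 by rewrite /content /beta /=; lia.
  rewrite subrK; apply/andP; split; first by apply/asboolP; exists r.
  by apply: (maya_gap (r := r)); rewrite /beta; lia.
case/andP=> /asboolP[r beta_r] not_k; exists (r.+1, nth 0%N mu r); split.
  by move: beta_r; rewrite /content /beta /=; lia.
apply/removable_cellP; exists r => //; rewrite ltnNge.
apply: contra not_k => no_drop; apply/asboolP; exists r.+1.
by have := row_nonincr (leqnSn r); move: beta_r; rewrite /beta; lia.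
Qed.

Lemma addable_maya (k : int) :
  (exists c, content c = k /\ addable mu c) <-> maya k && ~~ maya (k + 1).
Proof.
split=> [[_ [<- /addable_cellP [r -> corner_r]]] | ].
  have -> : content (r.+1, (nth 0%N mu r).+1) = beta r by rewrite /content /beta /=; lia.
  apply/andP; split; first by apply/asboolP; exists r.
  case: r corner_r => [_ | r /= drop_r].
    by apply/asboolP => -[r' beta_r']; have := beta_nonincr (leq0n r'); lia.
  by apply: (maya_gap (r := r)); rewrite /beta; lia.
case/andP=> /asboolP[r beta_r] not_k1; exists (r.+1, (nth 0%N mu r).+1); split.
  by move: beta_r; rewrite /content /beta /=; lia.
apply/addable_cellP; exists r => //; case: r beta_r => //= r beta_r.
rewrite ltnNge; apply: contra not_k1 => no_drop; apply/asboolP; exists r.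
by have := row_nonincr (leqnSn r); move: beta_r; rewrite /beta; lia.
Qed.

End NonincreasingRows.

Local Open Scope ring_scope.

Theorem lemma9p10 (mu : seq nat) (k : int) (hmu : is_partition mu) :
  let b := res_coef mu in
  ((exists c, content c = k /\ removable mu c) <->
     (if 0 < k then b (k - 1) = b k /\ b (k + 1) = b k - 1
      else if k < 0 then b (k + 1) = b k /\ b (k - 1) = b k - 1
      else b (-1) = b 1 /\ b 0 = b 1 + 1))
  /\
  ((exists c, content c = k /\ addable mu c) <->
     (if 0 < k then b (k + 1) = b k /\ b (k - 1) = b k + 1
      else if k < 0 then b (k - 1) = b k /\ b (k + 1) = b k + 1
      else b (-1) = b 0 /\ b 0 = b 1))
  /\
  ((~ exists c, content c = k /\ (addable mu c \/ removable mu c)) <->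
     (if 0 < k then
        (b (k + 1) = b k /\ b k = b (k - 1)) \/
        (b (k + 1) = b k - 1 /\ b k - 1 = b (k - 1) - 2)
      else if k < 0 then
        (b (k + 1) = b k /\ b k = b (k - 1)) \/
        (b (k + 1) = b k + 1 /\ b k + 1 = b (k - 1) + 2)
      else
        (b (-1) = b 0 /\ b 0 = b 1 + 1) \/
        (b 1 = b 0 /\ b 0 = b (-1) + 1))).
Proof.
move=> b; have mu_nonincr : sorted geq mu := (andP hmu).1.
have neither_iff :
    (~ exists c, content c = k /\ (addable mu c \/ removable mu c)) <->
    ~ (exists c, content c = k /\ addable mu c) /\
    ~ (exists c, content c = k /\ removable mu c) by firstorder.
rewrite neither_iff (removable_maya mu_nonincr) (addable_maya mu_nonincr) /b.
move: (res_coef_diff mu_nonincr k) (res_coef_diff mu_nonincr (k + 1)); rewrite addrK.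
case: (maya mu k); case: (maya mu (k + 1)).
(* For k = 0, restate 0 - 1 as the literal -1 of the statement: lia compares
   the atoms b (-1), b 0 syntactically, structure instances included. *)
all: case: ltrgt0P => [k_gt0 | k_lt0 | k0];
  last (have -> : k = 0 := k0; rewrite (_ : (0 : int) - 1 = -1) // add0r).
all: by move=> /= step_k step_k1; split; [|split]; split; lia.
Qed.
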